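(* Let $\lambda>0$ and let $\{f_i\}_{i\in I}$ be a $\lambda$-tight frame for a Hilbert space $\mathbb H$. Then for every $J\subset I$ and every $f\in\mathbb H$, $$\lambda\sum_{i\in J}|\langle f,f_i\rangle|^2-\Big\|\sum_{i\in J}\langle f,f_i\rangle f_i\Big\|^2=\lambda\sum_{i\in J^c}|\langle f,f_i\rangle|^2-\Big\|\sum_{i\in J^c}\langle f,f_i\rangle f_i\Big\|^2,$$ where $J^c=I\setminus J$.
   Context: A family $\{f_i\}_{i\in I}$ in a Hilbert space $\mathbb H$ is a $\lambda$-tight frame if $\sum_{i\in I}|\langle f,f_i\rangle|^2=\lambda\|f\|^2$ for all $f\in\mathbb H$. *)

From HB Require Import structures.
From mathcomp Require Import all_boot all_order all_algebra.
From mathcomp Require Import finmap.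
From mathcomp Require Import boolp classical_sets reals.
From mathcomp Require Import complex.

Set Implicit Arguments.
Unset Strict Implicit.
Unset Printing Implicit Defensive.

Import Order.TTheory GRing.Theory Num.Theory.
Local Open Scope ring_scope.
Local Open Scope complex_scope.

Section Hilbert.
Variable R : realType.
Variable H : lmodType R[i].
Variable ip : H -> H -> R[i].

Definition hnorm (x : H) : R := Num.sqrt (complex.Re (ip x x)).

Record is_hilbert : Prop := IsHilbert {
  ip_linear : forall (a : R[i]) (x y z : H), ip (a *: x + y) z = a * ip x z + ip y z;
  ip_conj   : forall x y : H, ip y x = (ip x y)^*;
  ip_pos    : forall x : H, x != 0 -> 0 < complex.Re (ip x x);
  ip_complete : forall u : nat -> H,
      (forall e : R, 0 < e -> exists N : nat, forall m n, (N <= m)%N -> (N <= n)%N ->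
         hnorm (u m - u n) < e) ->
      exists l : H, forall e : R, 0 < e -> exists N : nat, forall n, (N <= n)%N ->
         hnorm (l - u n) < e
}.
End Hilbert.

(* Unconditional summation over an arbitrary (sub)set J of an index type I:
   s = sum_{i in J} g i  iff the net of finite partial sums over finite
   subsets of J, directed by inclusion, converges to s w.r.t. the norm N. *)
Definition has_usum (R : realType) (V : zmodType) (N : V -> R)
    (I : choiceType) (J : set I) (g : I -> V) (s : V) : Prop :=
  forall e : R, 0 < e ->
    exists F0 : {fset I}, (forall i, i \in F0 -> J i) /\
      forall F : {fset I}, fsubset F0 F -> (forall i, i \in F -> J i) ->
        N (s - \sum_(i <- F) g i) < e.

Definition csq (R : realType) (z : R[i]) : R := (complex.Re z) ^+ 2 + (complex.Im z) ^+ 2.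

Definition tight_frame (R : realType) (H : lmodType R[i]) (ip : H -> H -> R[i])
    (I : choiceType) (fr : I -> H) (lambda : R) : Prop :=
  forall f : H, has_usum (fun x : R => `|x|) [set: I]
                  (fun i => csq (ip f (fr i))) (lambda * hnorm ip f ^+ 2).

From HB Require Import structures.
From mathcomp Require Import all_boot all_order all_algebra.
From mathcomp Require Import finmap.
From mathcomp Require Import boolp classical_sets reals.
From mathcomp Require Import complex.
From mathcomp Require Import ring lra.

Set Implicit Arguments.
Unset Strict Implicit.
Unset Printing Implicit Defensive.

(* Write s_J for the sum of <f, f_i> f_i over J.  The coefficient series
   sum_J |<f, f_i>|^2 converge because their partial sums are bounded by the
   upper frame bound.  The synthesis bound |sum c_i f_i|^2 <= lambda sum |c_i|^2
   (AM-GM plus the upper frame bound applied to the sum itself) turns this into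
   the Cauchy property of the vector series, so s_J exists by completeness.
   Summing over J and J^c gives <s_I, f> = lambda |f|^2 and
   |s_I|^2 <= lambda^2 |f|^2, so |s_I - lambda f|^2 <= 0, i.e.
   s_{J^c} = lambda f - s_J.  Expanding |lambda f - s_J|^2 with
   <s_J, f> = sum_J |<f, f_i>|^2 gives the identity. *)

Import Order.TTheory GRing.Theory Num.Theory.
Local Open Scope fset_scope.
Local Open Scope ring_scope.
Local Open Scope complex_scope.

Lemma big_fset_subD (V : nmodType) (I : choiceType) (g : I -> V) (F G : {fset I}) :
  F `<=` G -> \sum_(i <- G) g i = \sum_(i <- F) g i + \sum_(i <- G `\` F) g i.
Proof.
move=> /fsubsetP FG; rewrite (big_fsetID _ (mem F)); congr (_ + _); apply: eq_fbigl => i.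
  by rewrite !inE /=; apply/andP/idP => [[]//|iF]; rewrite iF FG.
by rewrite !inE /= andbC.
Qed.

Section Seminorm.
Variables (R : realType) (V : zmodType) (N : V -> R) (I : choiceType).
Hypotheses (N_triangle : forall x y, N (x + y) <= N x + N y)
           (N_opp : forall x, N (- x) = N x).

Definition usum_cauchy (K : set I) (g : I -> V) : Prop :=
  forall e : R, 0 < e ->
    exists F0 : {fset I}, (forall i, i \in F0 -> K i) /\
      forall F F' : {fset I}, F0 `<=` F -> F0 `<=` F' ->
        (forall i, i \in F -> K i) -> (forall i, i \in F' -> K i) ->
        N (\sum_(i <- F) g i - \sum_(i <- F') g i) < e.

Lemma has_usum_cauchy (K : set I) (g : I -> V) (s : V) :
  has_usum N K g s -> usum_cauchy K g.
Proof.
move=> hs e e0; have e2 : 0 < e / 2 by rewrite divr_gt0.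
have [F0 [F0K hF0]] := hs _ e2.
exists F0; split=> // F F' F0F F0F' FK F'K.
have -> : \sum_(i <- F) g i - \sum_(i <- F') g i
        = (s - \sum_(i <- F') g i) + - (s - \sum_(i <- F) g i).
  by rewrite [RHS]addrC opprB addrA subrK.
apply: (le_lt_trans (N_triangle _ _)); rewrite N_opp.
by rewrite [e](splitr e) ltrD ?hF0.
Qed.

Lemma usum_cauchy_of_tails (K : set I) (g : I -> V) :
  (forall e : R, 0 < e -> exists F0 : {fset I}, (forall i, i \in F0 -> K i) /\
     forall F : {fset I}, F0 `<=` F -> (forall i, i \in F -> K i) ->
       N (\sum_(i <- F) g i - \sum_(i <- F0) g i) < e) ->
  usum_cauchy K g.
Proof.
move=> hg e e0; have e2 : 0 < e / 2 by rewrite divr_gt0.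
have [F0 [F0K hF0]] := hg _ e2; exists F0; split=> // F F' F0F F0F' FK F'K.
have -> : \sum_(i <- F) g i - \sum_(i <- F') g i
        = (\sum_(i <- F) g i - \sum_(i <- F0) g i)
          + - (\sum_(i <- F') g i - \sum_(i <- F0) g i).
  by rewrite opprB addrA subrK.
by apply: le_lt_trans (N_triangle _ _) _; rewrite N_opp [e]splitr ltrD ?hF0.
Qed.

Lemma usum_split (J : set I) (g : I -> V) (x y : V) :
  has_usum N J g x -> has_usum N (~` J)%classic g y -> has_usum N setT g (x + y).
Proof.
move=> hx hy e e0; have e2 : 0 < e / 2 by rewrite divr_gt0.
have [Fx [FxJ hFx]] := hx _ e2; have [Fy [FyJ hFy]] := hy _ e2.
exists (Fx `|` Fy); split => // F hF _.
rewrite (big_fsetID _ (fun i => `[< J i >])) opprD addrACA.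
apply: (le_lt_trans (N_triangle _ _)); rewrite [e](splitr e) ltrD //.
  apply: hFx => [|i]; last by rewrite !inE => /andP[_ /asboolP].
  apply/fsubsetP => i iFx; rewrite !inE; apply/andP; split.
    by apply: (fsubsetP hF); rewrite in_fsetU iFx.
  by apply/asboolP; apply: FxJ.
apply: hFy => [|i]; last by rewrite !inE => /andP[_ /asboolPn].
apply/fsubsetP => i iFy; rewrite !inE; apply/andP; split.
  by apply: (fsubsetP hF); rewrite in_fsetU iFy orbT.
by apply/asboolPn; apply: FyJ.
Qed.

End Seminorm.

Section NonnegSums.
Variables (R : realType) (I : choiceType) (g : I -> R).
Hypothesis g_ge0 : forall i, 0 <= g i.

Lemma fsum_mono (F G : {fset I}) :
  F `<=` G -> \sum_(i <- F) g i <= \sum_(i <- G) g i.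
Proof. by move=> FG; rewrite (big_fset_subD _ FG) lerDl sumr_ge0. Qed.

Lemma usum_ge_partial (K : set I) (a : R) (F : {fset I}) :
  has_usum (fun x : R => `|x|) K g a -> (forall i, i \in F -> K i) ->
  \sum_(i <- F) g i <= a.
Proof.
move=> ha FK; apply/ler_addgt0Pr => e e0.
have [F0 [F0K hF0]] := ha _ e0.
have FF0K i : i \in F `|` F0 -> K i by rewrite in_fsetU => /orP[/FK|/F0K].
have := hF0 _ (fsubsetUr F F0) FF0K; rewrite ltr_norml => /andP[lo _].
have := fsum_mono (fsubsetUl F F0); lra.
Qed.

Lemma has_usum_bounded (K : set I) (M : R) :
  (forall F : {fset I}, (forall i, i \in F -> K i) -> \sum_(i <- F) g i <= M) ->
  exists a, has_usum (fun x : R => `|x|) K g a.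
Proof.
move=> bounded.
pose S := [set \sum_(i <- F) g i | F in [set F : {fset I} | forall i, i \in F -> K i]]%classic.
have hS : has_sup S.
  split; first by exists 0, fset0 => //; rewrite big_seq_fset0.
  by exists M => _ [F FK <-]; apply: bounded.
exists (sup S) => e e0.
have [_ [F FK <-] hF] := sup_adherent e0 hS.
exists F; split => // F' FF' F'K.
have le_sup : \sum_(i <- F') g i <= sup S by apply: sup_upper_bound => //; exists F'.
have := fsum_mono FF'; rewrite ger0_norm; lra.
Qed.

End NonnegSums.

Lemma usum_unique (R : realType) (I : choiceType) (K : set I) (g : I -> R) (a b : R) :
  has_usum (fun x : R => `|x|) K g a -> has_usum (fun x : R => `|x|) K g b -> a = b.
Proof.
move=> ha hb; apply/eqP; rewrite -subr_eq0 -normr_le0; apply/ler_addgt0Pr => e e0.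
have e2 : 0 < e / 2 by rewrite divr_gt0.
have [Fa [FaK hFa]] := ha _ e2; have [Fb [FbK hFb]] := hb _ e2.
have FK i : i \in Fa `|` Fb -> K i by rewrite in_fsetU => /orP[/FaK|/FbK].
have := hFa _ (fsubsetUl Fa Fb) FK; have := hFb _ (fsubsetUr Fa Fb) FK.
rewrite add0r !ltr_norml => /andP[? ?] /andP[? ?].
rewrite ler_norml; lra.
Qed.

Lemma csq_ge0 (R : realType) (z : R[i]) : 0 <= csq z.
Proof. by rewrite addr_ge0 ?sqr_ge0. Qed.

Lemma Re_mul_conj (R : realType) (z : R[i]) : complex.Re (z * z^*) = csq z.
Proof. by case: z => a b; rewrite /csq /=; ring. Qed.

Lemma Re_mul_conj_le (R : realType) (t : R) (c d : R[i]) : 0 < t ->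
  2 * complex.Re (c * d^*) <= t * csq c + csq d / t.
Proof.
case: c => a b; case: d => x y t0; rewrite /csq /=.
have : 0 <= ((t * a - x) ^+ 2 + (t * b - y) ^+ 2) / t.
  by rewrite divr_ge0 ?addr_ge0 ?sqr_ge0 // ltW.
have -> : ((t * a - x) ^+ 2 + (t * b - y) ^+ 2) / t
        = t * (a ^+ 2 + b ^+ 2) + (x ^+ 2 + y ^+ 2) / t - 2 * (a * x - b * - y)
  by field; rewrite gt_eqF.
lra.
Qed.

Lemma eventually_invS_lt (R : archiFieldType) (c : R) : 0 < c ->
  exists N, forall n, (N <= n)%N -> (n.+1%:R)^-1 < c.
Proof.
move=> c0; exists (Num.Def.archi_bound c^-1) => n Nn.
rewrite invf_plt ?posrE ?ltr0Sn //.
apply: lt_le_trans (archi_boundP _) _; first by rewrite invr_ge0 ltW.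
by rewrite ler_nat leqW.
Qed.

Section InnerProduct.
Variables (R : realType) (H : lmodType R[i]) (ip : H -> H -> R[i]).
Hypothesis hH : is_hilbert ip.

Lemma ipDl x y z : ip (x + y) z = ip x z + ip y z.
Proof. by have := ip_linear hH 1 x y z; rewrite scale1r mul1r. Qed.

Lemma ip0l z : ip 0 z = 0.
Proof. by apply: (addrI (ip 0 z)); rewrite -ipDl !addr0. Qed.

Lemma ipZl a x z : ip (a *: x) z = a * ip x z.
Proof. by have := ip_linear hH a x 0 z; rewrite addr0 ip0l addr0. Qed.

Lemma ipNl x z : ip (- x) z = - ip x z.
Proof. by rewrite -scaleN1r ipZl mulN1r. Qed.

Lemma ip0r z : ip z 0 = 0.
Proof. by rewrite (ip_conj hH) ip0l conjc0. Qed.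

Lemma ipDr x y z : ip z (x + y) = ip z x + ip z y.
Proof. by rewrite !(ip_conj hH _ z) ipDl rmorphD. Qed.

Lemma ip_suml (J : Type) (s : seq J) (g : J -> H) z :
  ip (\sum_(j <- s) g j) z = \sum_(j <- s) ip (g j) z.
Proof. exact: (big_morph (ip^~ z) (fun x y => ipDl x y z) (ip0l z)). Qed.

Lemma Re_ip_sym x y : complex.Re (ip y x) = complex.Re (ip x y).
Proof. by rewrite (ip_conj hH); case: (ip x y). Qed.

Lemma Re_ipZl (k : R) x y : complex.Re (ip (k%:C *: x) y) = k * complex.Re (ip x y).
Proof. by rewrite ipZl; case: (ip x y) => a b /=; rewrite mul0r subr0. Qed.

Lemma Re_ip_ge0 x : 0 <= complex.Re (ip x x).
Proof. by have [->|/(ip_pos hH)/ltW//] := eqVneq x 0; rewrite ip0l. Qed.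

Lemma hnorm_ge0 x : 0 <= hnorm ip x.
Proof. exact: sqrtr_ge0. Qed.

Lemma hnorm_sqr x : hnorm ip x ^+ 2 = complex.Re (ip x x).
Proof. by rewrite sqr_sqrtr // Re_ip_ge0. Qed.

Lemma hnorm_eq0 x : hnorm ip x = 0 -> x = 0.
Proof.
move=> x0; apply/eqP; apply: contraTT isT => /(ip_pos hH).
by rewrite -hnorm_sqr x0 expr0n ltxx.
Qed.

Lemma hnormD_sqr x y :
  hnorm ip (x + y) ^+ 2 = hnorm ip x ^+ 2 + 2 * complex.Re (ip x y) + hnorm ip y ^+ 2.
Proof. by rewrite !hnorm_sqr ipDl !ipDr !raddfD /= (Re_ip_sym x y); ring. Qed.

Lemma hnormN x : hnorm ip (- x) = hnorm ip x.
Proof.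
by rewrite /hnorm ipNl (ip_conj hH) ipNl rmorphN /= opprK -(ip_conj hH).
Qed.

Lemma hnormZ_sqr (k : R) x : hnorm ip (k%:C *: x) ^+ 2 = k ^+ 2 * hnorm ip x ^+ 2.
Proof.
rewrite !hnorm_sqr ipZl (ip_conj hH _ x) ipZl.
by case: (ip x x) => a b /=; ring.
Qed.

Lemma Re_ipZr (k : R) x y : complex.Re (ip x (k%:C *: y)) = k * complex.Re (ip x y).
Proof. by rewrite Re_ip_sym Re_ipZl Re_ip_sym. Qed.

Lemma Re_ip_le x y : complex.Re (ip x y) <= hnorm ip x * hnorm ip y.
Proof.
have key : hnorm ip x * hnorm ip y * complex.Re (ip x y) <= (hnorm ip x * hnorm ip y) ^+ 2.
  have := sqr_ge0 (hnorm ip ((hnorm ip y)%:C *: x + (- hnorm ip x)%:C *: y)).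
  rewrite hnormD_sqr !hnormZ_sqr Re_ipZl Re_ipZr; lra.
have [/eqP|xy_neq0] := eqVneq (hnorm ip x * hnorm ip y) 0.
  rewrite mulf_eq0 => /orP[]/eqP/hnorm_eq0 ->;
  by rewrite ?ip0l ?ip0r mulr_ge0 ?hnorm_ge0.
have xy_gt0 : 0 < hnorm ip x * hnorm ip y by rewrite lt_def xy_neq0 mulr_ge0 ?hnorm_ge0.
by rewrite -(ler_pM2l xy_gt0) -expr2.
Qed.

Lemma Re_ip_norm_le x y : `|complex.Re (ip x y)| <= hnorm ip x * hnorm ip y.
Proof.
have := Re_ip_le x y; have := Re_ip_le (- x) y.
rewrite ipNl raddfN hnormN ler_norml; lra.
Qed.

Lemma hnormD_le x y : hnorm ip (x + y) <= hnorm ip x + hnorm ip y.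
Proof.
rewrite -ler_sqr ?nnegrE ?addr_ge0 ?hnorm_ge0 // hnormD_sqr.
have := Re_ip_le x y; lra.
Qed.

Lemma hnormB_sqr x y :
  hnorm ip (x - y) ^+ 2 = hnorm ip x ^+ 2 - 2 * complex.Re (ip x y) + hnorm ip y ^+ 2.
Proof. by rewrite hnormD_sqr hnormN (Re_ip_sym (- y)) ipNl raddfN Re_ip_sym mulrN. Qed.

Lemma eq_scale_of_Re_ip (k : R) x y :
  complex.Re (ip x y) = k * hnorm ip y ^+ 2 -> hnorm ip x ^+ 2 <= k ^+ 2 * hnorm ip y ^+ 2 ->
  x = k%:C *: y.
Proof.
move=> Rxy nx; apply/eqP; rewrite -subr_eq0; apply/eqP/hnorm_eq0/eqP.
rewrite -sqrf_eq0 eq_le sqr_ge0 andbT hnormB_sqr hnormZ_sqr Re_ipZr Rxy.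
lra.
Qed.

Lemma usum_Re_ip (I : choiceType) (K : set I) (g : I -> H) (s y : H) :
  has_usum (hnorm ip) K g s ->
  has_usum (fun x : R => `|x|) K (fun i => complex.Re (ip (g i) y)) (complex.Re (ip s y)).
Proof.
move=> hs e e0.
have y1 : 0 < hnorm ip y + 1 by rewrite ltr_wpDl ?hnorm_ge0.
have [F0 [F0K hF0]] := hs _ (divr_gt0 e0 y1).
exists F0; split=> // F F0F FK.
rewrite -raddf_sum -ip_suml -raddfB -[ip s y - _]addrC -ipNl -ipDl addrC.
apply: (le_lt_trans (Re_ip_norm_le _ _)).
have := hF0 _ F0F FK; rewrite ltr_pdivlMr // => lt_e.
have := hnorm_ge0 y; have := hnorm_ge0 (s - \sum_(i <- F) g i); nra.
Qed.

Lemma has_usum_of_cauchy (I : choiceType) (K : set I) (g : I -> H) :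
  usum_cauchy (hnorm ip) K g -> exists s, has_usum (hnorm ip) K g s.
Proof.
move=> hg; pose eps (n : nat) : R := (n.+1%:R)^-1.
have eps_gt0 n : 0 < eps n by rewrite invr_gt0 ltr0Sn.
have [Phi hPhi] := choice (fun n => hg _ (eps_gt0 n)).
(* Completeness is only sequential: follow the partial sums along the
   unions P n of the first n+1 Cauchy bases. *)
pose P n := \bigcup_(k <- iota 0 n.+1) Phi k.
have PK n i : i \in P n -> K i.
  by move=> /bigfcupP[k _]; apply: (hPhi k).1.
have PhiP k n : (k <= n)%N -> Phi k `<=` P n.
  by move=> kn; apply: bigfcup_sup => //; rewrite mem_iota add0n ltnS kn.
have [|l hl] := ip_complete hH (u := fun n => \sum_(i <- P n) g i).
  move=> e e0; have [N hN] := eventually_invS_lt e0.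
  exists N => m n Nm Nn; apply: lt_trans (hN _ (leqnn N)).
  by apply: (hPhi N).2; [exact: PhiP | exact: PhiP | exact: PK | exact: PK].
exists l => e e0; have e2 : 0 < e / 2 by rewrite divr_gt0.
have [N1 hN1] := hl _ e2; have [N2 hN2] := eventually_invS_lt e2.
pose n := maxn N1 N2; exists (P n); split=> [|F PF FK]; first exact: PK.
have -> : l - \sum_(i <- F) g i
    = (l - \sum_(i <- P n) g i) + (\sum_(i <- P n) g i - \sum_(i <- F) g i).
  by rewrite addrA subrK.
apply: le_lt_trans (hnormD_le _ _) _; rewrite [e]splitr ltrD //.
  exact: hN1 (leq_maxl _ _).
apply: lt_trans (hN2 n (leq_maxr _ _)).
have PhiF : Phi n `<=` F := fsubset_trans (PhiP n n (leqnn n)) PF.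
exact: (hPhi n).2 (PhiP n n (leqnn n)) PhiF (PK n) FK.
Qed.

End InnerProduct.

Section TightFrame.
Variables (R : realType) (H : lmodType R[i]) (ip : H -> H -> R[i]).
Hypothesis hH : is_hilbert ip.
Variables (I : choiceType) (fr : I -> H) (lambda : R).
Hypotheses (lambda_gt0 : 0 < lambda) (hframe : tight_frame ip fr lambda).

Lemma frame_partial_le (g : H) (F : {fset I}) :
  \sum_(i <- F) csq (ip g (fr i)) <= lambda * hnorm ip g ^+ 2.
Proof. by apply: usum_ge_partial (hframe g) _ => // i; apply: csq_ge0. Qed.

Lemma synthesis_bound (c : I -> R[i]) (F : {fset I}) :
  hnorm ip (\sum_(i <- F) c i *: fr i) ^+ 2 <= lambda * \sum_(i <- F) csq (c i).
Proof.
set g := \sum_(i <- F) c i *: fr i.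
have expand : hnorm ip g ^+ 2 = \sum_(i <- F) complex.Re (c i * (ip g (fr i))^*).
  rewrite (hnorm_sqr hH) {1}/g (ip_suml hH) raddf_sum; apply: eq_bigr => i _.
  by rewrite (ipZl hH) (ip_conj hH g).
have amgm : 2 * hnorm ip g ^+ 2
    <= lambda * \sum_(i <- F) csq (c i) + (\sum_(i <- F) csq (ip g (fr i))) / lambda.
  rewrite expand mulr_sumr mulr_sumr mulr_suml -big_split /=.
  by apply: ler_sum => i _; apply: Re_mul_conj_le.
have : (\sum_(i <- F) csq (ip g (fr i))) / lambda <= hnorm ip g ^+ 2.
  by rewrite ler_pdivrMr // mulrC frame_partial_le.
lra.
Qed.

Lemma frame_coef_usum (f : H) (K : set I) :
  exists a, has_usum (fun x : R => `|x|) K (fun i => csq (ip f (fr i))) a.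
Proof.
by apply: (has_usum_bounded _ (fun F _ => frame_partial_le f F)) => i; apply: csq_ge0.
Qed.

Lemma synthesis_usum (c : I -> R[i]) (K : set I) (a : R) :
  has_usum (fun x : R => `|x|) K (fun i => csq (c i)) a ->
  exists s, has_usum (hnorm ip) K (fun i => c i *: fr i) s.
Proof.
move=> ha; apply: (has_usum_of_cauchy hH).
apply: (usum_cauchy_of_tails (hnormD_le hH) (hnormN hH)) => e e0.
have d0 : 0 < e ^+ 2 / lambda by rewrite divr_gt0 ?exprn_gt0.
have [F0 [F0K hF0]] := has_usum_cauchy (@ler_normD _ R) (@normrN _ R) ha d0.
exists F0; split=> // F F0F FK.
rewrite -ltr_sqr ?nnegrE ?hnorm_ge0 ?ltW // (big_fset_subD _ F0F) addrC addKr.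
apply: le_lt_trans (synthesis_bound _ _) _.
have := hF0 _ _ F0F (fsubset_refl _) FK F0K.
rewrite (big_fset_subD _ F0F) addrC addKr ltr_norml ltr_pdivlMr // => /andP[_].
by rewrite mulrC.
Qed.

Lemma synthesis_usum_norm (c : I -> R[i]) (K : set I) (a : R) (s : H) :
  has_usum (fun x : R => `|x|) K (fun i => csq (c i)) a ->
  has_usum (hnorm ip) K (fun i => c i *: fr i) s ->
  hnorm ip s ^+ 2 <= lambda * a.
Proof.
move=> ha hs.
have a_ge0 : 0 <= lambda * a.
  apply: mulr_ge0; first exact: ltW.
  have := usum_ge_partial (fun i => csq_ge0 (c i)) ha (F := fset0).
  by rewrite big_seq_fset0; apply=> i; rewrite inE.
rewrite -(sqr_sqrtr a_ge0) ler_sqr ?nnegrE ?hnorm_ge0 ?sqrtr_ge0 //.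
apply/ler_addgt0Pr => e e0; have [F0 [F0K hF0]] := hs _ e0.
have partial : hnorm ip (\sum_(i <- F0) c i *: fr i) <= Num.sqrt (lambda * a).
  rewrite -ler_sqr ?nnegrE ?hnorm_ge0 ?sqrtr_ge0 // (sqr_sqrtr a_ge0).
  apply: le_trans (synthesis_bound _ _) _; rewrite ler_pM2l //.
  by apply: (usum_ge_partial _ ha F0K) => i; apply: csq_ge0.
have := hF0 _ (fsubset_refl _) F0K.
have := hnormD_le hH (s - \sum_(i <- F0) c i *: fr i) (\sum_(i <- F0) c i *: fr i).
rewrite subrK => tri lt_e.
by apply: le_trans tri _; rewrite addrC lerD // ltW.
Qed.

Lemma Re_ip_synthesis (f : H) (K : set I) (a : R) (s : H) :
  has_usum (fun x : R => `|x|) K (fun i => csq (ip f (fr i))) a ->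
  has_usum (hnorm ip) K (fun i => ip f (fr i) *: fr i) s ->
  complex.Re (ip s f) = a.
Proof.
move=> ha hs; apply: usum_unique (usum_Re_ip hH f hs) _.
suff -> : (fun i => complex.Re (ip (ip f (fr i) *: fr i) f))
          = (fun i => csq (ip f (fr i))) by [].
by apply: funext => i; rewrite (ipZl hH) (ip_conj hH f (fr i)) Re_mul_conj.
Qed.

End TightFrame.

Local Open Scope classical_set_scope.

Theorem corollary3p4 (R : realType) (H : lmodType R[i]) (ip : H -> H -> R[i])
    (hH : is_hilbert ip) (I : choiceType) (fr : I -> H) (lambda : R)
    (hlam : 0 < lambda) (hframe : tight_frame ip fr lambda)
    (J : set I) (f : H) :
  exists (a b : R) (sJ sJc : H),
    [/\ has_usum (fun x : R => `|x|) J (fun i => csq (ip f (fr i))) a,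
        has_usum (fun x : R => `|x|) (~` J) (fun i => csq (ip f (fr i))) b,
        has_usum (hnorm ip) J (fun i => ip f (fr i) *: fr i) sJ,
        has_usum (hnorm ip) (~` J) (fun i => ip f (fr i) *: fr i) sJc &
        lambda * a - hnorm ip sJ ^+ 2 = lambda * b - hnorm ip sJc ^+ 2].
Proof.
have [a ha] := frame_coef_usum hframe f J.
have [b hb] := frame_coef_usum hframe f (~` J).
have [sJ hsJ] := synthesis_usum hH hlam hframe ha.
have [sJc hsJc] := synthesis_usum hH hlam hframe hb.
exists a, b, sJ, sJc; split=> //.
have hab := usum_split (@ler_normD _ R) ha hb.
have hs := usum_split (hnormD_le hH) hsJ hsJc.
have ab : a + b = lambda * hnorm ip f ^+ 2 := usum_unique hab (hframe f).
have Re_s : complex.Re (ip (sJ + sJc) f) = lambda * hnorm ip f ^+ 2.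
  by rewrite -ab (Re_ip_synthesis hH hab hs).
have sJ_sJc : sJ + sJc = lambda%:C *: f.
  apply: (eq_scale_of_Re_ip hH Re_s).
  by rewrite expr2 -mulrA -ab (synthesis_usum_norm hH hlam hframe hab hs).
have -> : sJc = lambda%:C *: f - sJ by rewrite -sJ_sJc addrC addKr.
rewrite (hnormB_sqr hH) (hnormZ_sqr hH) (Re_ipZl hH) (Re_ip_sym hH).
rewrite (Re_ip_synthesis hH ha hsJ).
have -> : b = lambda * hnorm ip f ^+ 2 - a by lra.
ring.
Qed.
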